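(* Let $n$ be an odd positive integer having a unique prime divisor $p'$ with $v_{p'}(n)=2$, such that $v_q(n)=1$ for every prime divisor $q\neq p'$ of $n$, and let $A=S(n)$. Let $S=(x_1,\ldots,x_l)$ be a sequence in $\mathbb{Z}_n$ such that for every prime divisor $p$ of $n$, at least two terms of $S$ are coprime to $p$. Let $n'=n/p'^{\,2}$ and let $S'$ be the image of $S$ under the natural map $\mathbb{Z}_n\to\mathbb{Z}_{n'}$. Suppose at most one term of $S'$ is a unit. Then $S$ is an $A$-weighted zero-sum sequence.
   Context: $\mathbb{Z}_m$ is the integers mod $m$, $U(m)$ its unit group; $v_p(n)=r$ means $p^r\mid n$, $p^{r+1}\nmid n$. For $A\subseteq\mathbb{Z}_n$, a sequence $(x_1,\ldots,x_l)$ is an $A$-weighted zero-sum sequence if there exist $a_i\in A$ with $\sum a_ix_i=0$. For odd $m=\prod p_i^{r_i}$ and $a\in U(m)$, $\left(\frac{a}{m}\right)=\prod\left(\frac{a}{p_i}\right)^{r_i}$ (Legendre symbols of images mod $p_i$), and $S(m)$ is the kernel of $a\mapsto\left(\frac{a}{m}\right)$ on $U(m)$. *)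

From HB Require Import structures.
From mathcomp Require Import all_boot all_order all_algebra.
Set Implicit Arguments. Unset Strict Implicit. Unset Printing Implicit Defensive.
Import Order.TTheory GRing.Theory Num.Theory.

Definition is_sq_mod (a p : nat) : bool :=
  [exists x : 'I_p, (x * x) %% p == a %% p].

Definition legendre (a p : nat) : int :=
  if p %| a then 0%R else if is_sq_mod a p then 1%R else (-1)%R.

Definition jacobi (a m : nat) : int :=
  (\prod_(p <- primes m) (legendre a p) ^+ (logn p m))%R.

Definition inS (m : nat) (a : 'Z_m) : bool :=
  coprime a m && (jacobi a m == 1%R).

Definition weighted_zero_sum (n : nat) (A : pred 'Z_n) (s : seq 'Z_n) : Prop :=
  exists w : nat -> 'Z_n,
    (forall i, i < size s -> w i \in A) /\
    (\sum_(i < size s) w i * s`_i = 0)%R.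

From mathcomp Require Import all_boot all_order all_algebra zify.
Set Implicit Arguments. Unset Strict Implicit. Unset Printing Implicit Defensive.
Import GRing.Theory.

(* Write n = m p'^2 with m squarefree.  For every prime p of n, two terms of
   the sequence are units mod p, so one can find weights, units mod p, making
   the weighted sum vanish mod p^(v_p(n)); moreover the weight of the only
   possible unit term mod m, x_i0, can be taken to be 1.  The Chinese
   remainder theorem glues these local weights into global ones w_i, units
   mod n, with sum w_i x_i = 0, and (w_i / n) is the product over p of the
   Legendre symbols of the local weights, raised to v_p(n).  The factor at p'
   is a square, hence 1, and for i0 all factors are 1.  For i <> i0 the term
   x_i is not a unit mod m, so some prime r | m divides x_i; the weight of x_i
   mod r is then irrelevant to the sum and can be replaced by 1 or by a
   non-residue mod r so as to make (w_i / n) = 1. *)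

Lemma all_exists_in (T : eqType) (U : Type) (u0 : U) (s : seq T)
    (P : T -> U -> Prop) :
  {in s, forall x, exists u, P x u} -> exists f : T -> U, {in s, forall x, P x (f x)}.
Proof.
elim: s => [|y s IHs] Hs; first by exists (fun=> u0).
have [u Pyu] := Hs y (mem_head y s).
have [f Pf] := IHs (fun x xs => Hs x (mem_behead (s := y :: s) xs)).
exists (fun x => if x == y then u else f x) => x; rewrite inE.
by case: eqP => [-> | _ /Pf].
Qed.

Lemma count_gt1_nth_neq (T : Type) (x0 : T) (P : pred T) (s : seq T) (a : nat) :
  1 < count P s -> exists2 j, j < size s & (j != a) && P (nth x0 s j).
Proof.
elim: s a => [|y s IHs] [|a] //=.
  move=> two_P; have /(has_nthP x0)[j ltj Pj] : has P s.
    by rewrite has_count; case: (P y) two_P => // /ltnW.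
  by exists j.+1.
case Py: (P y) => /=; first by exists 0 => //=; rewrite Py.
by case/(IHs a) => j ltj Pj; exists j.+1.
Qed.

Lemma count_le1_find (T : Type) (x0 : T) (P : pred T) (s : seq T) (i : nat) :
  count P s <= 1 -> i < size s -> P (nth x0 s i) -> i = find P s.
Proof.
elim: s i => [|y s IHs] // [|i] /=; case: (P y) => //= le1 lti Pi; last first.
  by rewrite -(IHs i).
have : has P s by apply/(has_nthP x0); exists i.
by rewrite has_count; move: le1; rewrite add1n ltnS leqn0 => /eqP->.
Qed.

Lemma coprime_prime (a q : nat) : prime q -> coprime a q = ~~ (q %| a).
Proof. by move=> q_pr; rewrite coprime_sym prime_coprime. Qed.

Lemma primes_odd (n p : nat) : odd n -> p \in primes n -> odd p.
Proof.
move=> n_odd; rewrite mem_primes => /and3P[p_pr _ p_dvd].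
by have [p2 | //] := even_prime p_pr; move: p_dvd; rewrite p2 dvdn2 n_odd.
Qed.

Lemma coprime_mul_add_dvd (M a c : nat) : 0 < M -> coprime a M -> coprime c M ->
  exists2 u, coprime u M & M %| u * a + c.
Proof.
move=> M_gt0 coaM cocM; have [t _ dvdM] := Bezoutl a M_gt0.
rewrite gcdnC (eqP coaM) in dvdM.
exists (t * c); last by rewrite mulnAC -{2}[c]mul1n -mulnDl addnC dvdn_mulr.
rewrite coprimeMl cocM andbT /coprime -dvdn1.
by rewrite -(dvdn_addl _ (dvdn_mulr a (dvdn_gcdl t M))) (dvdn_trans (dvdn_gcdr t M)).
Qed.

Lemma coprime_partial_weighted_sum (q k i0 : nat) (x : seq nat) :
  prime q -> odd q -> k != i0 ->
  (exists2 j, j < size x & (j != k) && coprime (nth 0 x j) q) ->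
  exists g : nat -> nat, [/\ forall i, coprime (g i) q, g i0 = 1 &
    coprime (\sum_(i < size x | i != k :> nat) g i * nth 0 x i) q].
Proof.
move=> q_pr q_odd ki0 [j ltj /andP[jk coj]].
pose other_unit (l : 'I_(size x)) :=
  [&& l != k :> nat, l != i0 :> nat & coprime (nth 0 x l) q].
(* Either a unit term x_l with l <> k, i0 exists, and weight 1 or 2 on it makes
   the sum a unit, or all terms but x_k and the unit x_i0 vanish mod q. *)
case: (pickP other_unit) => [l /and3P[lk li0 col] | no_other].
  pose R := \sum_(i < size x | (i != k :> nat) && (i != l)) nth 0 x i.
  pose g b i := if i == l :> nat then b.+1 else 1.
  have sum_g b : \sum_(i < size x | i != k :> nat) g b i * nth 0 x i
                 = b.+1 * nth 0 x l + R.
    rewrite (bigD1 l) //= /g eqxx; congr (_ + _); apply: eq_bigr => i /andP[_ il].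
    by rewrite val_eqE (negbTE il) mul1n.
  have [b b_le1 co_sum] : exists2 b, b <= 1 & coprime (b.+1 * nth 0 x l + R) q.
    case: (boolP (coprime (1 * nth 0 x l + R) q)) => [co1 | ]; first by exists 0.
    rewrite !coprime_prime // negbK mul1n => dvd1.
    exists 1; rewrite // coprime_prime // mulSn mul1n -addnA (dvdn_addl _ dvd1).
    by rewrite -coprime_prime.
  exists (g b); split=> [i | | ]; last by rewrite sum_g.
  - rewrite /g; case: ifP => _; last exact: coprime1n.
    by case: b b_le1 {co_sum} => [|[|]] // _; rewrite ?coprime1n ?coprime2n.
  - by rewrite /g eq_sym (negbTE li0).
have ji0 : j = i0.
  apply/eqP; apply: contraFT (no_other (Ordinal ltj)) => ji0.
  by rewrite /other_unit /= jk ji0.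
have dvd_rest : q %| \sum_(i < size x | (i != k :> nat) && (i != Ordinal ltj))
                       1 * nth 0 x i.
  apply: dvdn_sum => i /andP[ik ij]; rewrite mul1n -[_ %| _]negbK -coprime_prime //.
  move: ij (no_other i); rewrite -val_eqE /= => ij.
  by rewrite /other_unit ik -ji0 ij /= => ->.
exists (fun=> 1); split=> [_ | // | ]; first exact: coprime1n.
rewrite (bigD1 (Ordinal ltj)) //= mul1n coprime_prime // (dvdn_addl _ dvd_rest).
by rewrite -coprime_prime.
Qed.

Lemma prime_power_unit_weighted_sum (q e i0 : nat) (x : seq nat) :
  prime q -> odd q -> 1 < count (coprime^~ q) x ->
  exists f : nat -> nat, [/\ forall i, coprime (f i) q, f i0 = 1 &
    q ^ e %| \sum_(i < size x) f i * nth 0 x i].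
Proof.
move=> q_pr q_odd two_units.
have [k ltk /andP[ki0 cok]] := count_gt1_nth_neq 0 i0 two_units.
have [g [cog g_i0 co_rest]] :=
  coprime_partial_weighted_sum q_pr q_odd ki0 (count_gt1_nth_neq 0 k two_units).
(* Solving modulo q^(e+1) rather than q^e keeps the new weight a unit mod q when e = 0. *)
have qe_gt0 : 0 < q ^ e.+1 by rewrite expn_gt0 prime_gt0.
rewrite -(@coprime_pexpr e.+1) // in cok; rewrite -(@coprime_pexpr e.+1) // in co_rest.
have [u cou dvd_u] := coprime_mul_add_dvd qe_gt0 cok co_rest.
exists (fun i => if i == k then u else g i); split=> [i | | ].
- by case: ifP => // _; rewrite -(@coprime_pexpr e.+1).
- by rewrite eq_sym (negbTE ki0).
rewrite (bigD1 (Ordinal ltk)) //= eqxx.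
rewrite (dvdn_trans (dvdn_exp2l q (leqnSn e))) //; congr (_ %| _ + _): dvd_u.
by apply: eq_bigr => i /negbTE ->.
Qed.

Lemma legendre_mod (a b p : nat) : a = b %[mod p] -> legendre a p = legendre b p.
Proof. by move=> eq_ab; rewrite /legendre /is_sq_mod /dvdn eq_ab. Qed.

Lemma legendre1 (p : nat) : 1 < p -> legendre 1 p = 1%R.
Proof.
move=> p_gt1; rewrite /legendre dvdn1 gtn_eqF //.
by have -> : is_sq_mod 1 p by apply/existsP; exists (Ordinal p_gt1).
Qed.

Lemma legendre_sqr (a p : nat) : ~~ (p %| a) -> (legendre a p ^+ 2 = 1)%R.
Proof. by move=> pNa; rewrite /legendre (negbTE pNa); case: ifP; rewrite ?sqrrN expr1n. Qed.

Lemma exists_nonsquare_mod (p : nat) : prime p -> odd p ->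
  exists a : 'I_p, ~~ is_sq_mod a p.
Proof.
move=> p_pr p_odd; have p_gt0 := prime_gt0 p_pr; have p_gt2 := odd_prime_gt2 p_odd p_pr.
pose sq (y : 'I_p) := Ordinal (ltn_pmod (y * y) p_gt0).
have [a aNsq] : exists a, a \notin codom sq.
  apply/existsP; apply: contraT; rewrite negb_exists => /forallP /= onto.
  have /image_injP sq_inj : #|image sq 'I_p| == #|'I_p|.
    by apply/eqP/eq_card => y; rewrite (negbNE (onto y)).
  have lt_pred : p.-1 < p by rewrite prednK.
  have /(congr1 val) /= : Ordinal (prime_gt1 p_pr) = Ordinal lt_pred.
    apply: sq_inj => //; apply: val_inj => /=.
    have -> : p.-1 * p.-1 = (p - 2) * p + 1 by nia.
    by rewrite modnMDl.
  lia.
exists a; apply: contra aNsq => /existsP[y /eqP sq_y].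
by apply/codomP; exists y; apply: val_inj; rewrite /= sq_y modn_small.
Qed.

Definition nonresidue (p : nat) : nat :=
  if [pick a : 'I_p | ~~ is_sq_mod a p] is Some a then a else 0.

Lemma legendre_nonresidue (p : nat) : prime p -> odd p ->
  legendre (nonresidue p) p = (-1)%R.
Proof.
move=> p_pr p_odd; rewrite /nonresidue; case: pickP => [a aNsq | no_nsq]; last first.
  by have [a] := exists_nonsquare_mod p_pr p_odd; rewrite no_nsq.
have a_neq0 : a != 0 :> nat.
  apply: contra aNsq => /eqP a0; apply/existsP.
  by exists (Ordinal (prime_gt0 p_pr)); rewrite a0 /= mod0n.
by rewrite /legendre /dvdn modn_small // (negbTE a_neq0) (negbTE aNsq).
Qed.

Lemma coprime_nonresidue (p : nat) : prime p -> odd p -> coprime (nonresidue p) p.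
Proof.
move=> p_pr p_odd; have := legendre_nonresidue p_pr p_odd.
by rewrite coprime_prime // /legendre; case: (p %| _).
Qed.

Lemma legendre_fix_sign (r : nat) (t : int) : prime r -> odd r -> (t ^+ 2 = 1)%R ->
  (legendre (if t == 1%R then 1 else nonresidue r) r * t = 1)%R.
Proof.
move=> r_pr r_odd /eqP; rewrite sqrf_eq1 => /orP[] /eqP ->.
  by rewrite eqxx legendre1 ?mulr1 ?prime_gt1.
by rewrite legendre_nonresidue // mulrNN mulr1.
Qed.

(* [chinese n`_p n`_p^' 1 0] is the idempotent of the p-primary component of Z_n. *)
Definition chinese_parts (n : nat) (r : nat -> nat) : nat :=
  \sum_(p <- primes n) chinese n`_p n`_p^' 1 0 * r p.

Lemma chinese_parts_mod (n : nat) (r : nat -> nat) (p : nat) :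
  p \in primes n -> chinese_parts n r = r p %[mod n`_p].
Proof.
move=> pn; rewrite /chinese_parts (bigD1_seq p) ?primes_uniq //=.
have dvd_rest : n`_p %| \sum_(q <- primes n | q != p) chinese n`_q n`_q^' 1 0 * r q.
  rewrite big_seq_cond; apply: dvdn_sum => q /andP[qn qp]; apply: dvdn_mulr.
  have dvd_part : n`_p %| n`_q^'.
    rewrite -(@partn_part p q^') ?dvdn_part // => y.
    by rewrite !inE => /eqP->; rewrite eq_sym.
  by rewrite (dvdn_trans dvd_part) // /dvdn chinese_modr ?coprime_partC ?mod0n.
rewrite -modnDmr (eqP dvd_rest) addn0 -modnMml chinese_modl ?coprime_partC //.
by rewrite modnMml mul1n.
Qed.

Lemma prime_dvd_part (n p : nat) : p \in primes n -> p %| n`_p.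
Proof. by move=> pn; rewrite p_part dvdn_exp // logn_gt0. Qed.

Lemma chinese_parts_modp (n : nat) (r : nat -> nat) (p : nat) :
  p \in primes n -> chinese_parts n r = r p %[mod p].
Proof.
move=> pn; have p_dvd := prime_dvd_part pn.
by rewrite -(modn_dvdm _ p_dvd) chinese_parts_mod ?modn_dvdm.
Qed.

Lemma coprime_primes (a n : nat) : 0 < n ->
  {in primes n, forall p, coprime a p} -> coprime a n.
Proof.
move=> n_gt0 co_a; apply: contraT => nco.
have g_gt1 : 1 < gcdn a n by rewrite ltn_neqAle eq_sym nco gcdn_gt0 n_gt0 orbT.
have pa := dvdn_trans (pdiv_dvd _) (dvdn_gcdl a n).
have pn : pdiv (gcdn a n) \in primes n.
  by rewrite mem_primes pdiv_prime // n_gt0 (dvdn_trans (pdiv_dvd _) (dvdn_gcdr a n)).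
by have := co_a _ pn; rewrite coprime_prime ?pdiv_prime // pa.
Qed.

Lemma jacobi_chinese_parts (n : nat) (r : nat -> nat) :
  jacobi (chinese_parts n r %% n) n
  = (\prod_(p <- primes n) legendre (r p) p ^+ logn p n)%R.
Proof.
apply: eq_big_seq => p pn; congr (_ ^+ _)%R; apply: legendre_mod.
by rewrite modn_dvdm ?chinese_parts_modp // (dvdn_trans (prime_dvd_part pn)) ?dvdn_part.
Qed.

Lemma weighted_zero_sum_chinese (n : nat) (s : seq 'Z_n) (L : nat -> nat -> nat) :
  1 < n ->
  (forall p, p \in primes n -> n`_p %| \sum_(i < size s) L p i * (s`_i)%R) ->
  (forall p i, p \in primes n -> coprime (L p i) p) ->
  (forall i, i < size s ->
     (\prod_(p <- primes n) legendre (L p i) p ^+ logn p n = 1)%R) ->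
  weighted_zero_sum (@inS n) s.
Proof.
move=> n_gt1 dvd_sum coL jacobiL; have n_gt0 := ltnW n_gt1.
pose w i := chinese_parts n (L^~ i).
exists (fun i => (w i)%:R%R); split=> [i lti | ].
  rewrite unfold_in /inS val_Zp_nat // coprime_modl jacobi_chinese_parts jacobiL //.
  rewrite eqxx andbT; apply: coprime_primes => // p pn.
  by rewrite -coprime_modl chinese_parts_modp // coprime_modl coL.
have -> : (\sum_(i < size s) (w i)%:R * s`_i
           = (\sum_(i < size s) w i * (s`_i)%R)%:R)%R.
  by rewrite natr_sum; apply: eq_bigr => i _; rewrite natrM natr_Zp.
suff /dvdnP[c ->] : n %| \sum_(i < size s) w i * (s`_i)%R.
  by rewrite natrM pchar_Zp ?mulr0.
apply/(dvdn_partP _ n_gt0) => p pn; rewrite /dvdn -modn_summ.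
rewrite (eq_bigr (fun i : 'I_(size s) => L p i * (s`_i)%R %% n`_p)) ?modn_summ.
  exact: dvd_sum.
by move=> i _; rewrite -modnMml chinese_parts_mod ?modnMml.
Qed.

Lemma prod_expn_logn_square_part (R : comPzSemiRingType) (n p' : nat) (t : nat -> R) :
  logn p' n = 2 -> {in primes n, forall q, q != p' -> logn q n = 1} ->
  (t p' ^+ 2 = 1)%R ->
  (\prod_(p <- primes n) t p ^+ logn p n = \prod_(p <- primes n | p != p') t p)%R.
Proof.
move=> logn_p' logn_q t_sq; have p'n : p' \in primes n by rewrite -logn_gt0 logn_p'.
rewrite (bigD1_seq p') ?primes_uniq //= logn_p' t_sq mul1r.
rewrite big_seq_cond [RHS]big_seq_cond; apply: eq_bigr => q /andP[qn qp'].
by rewrite logn_q ?expr1.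
Qed.

Lemma sum_map_val_nth (n : nat) (s : seq 'Z_n) (f : nat -> nat) :
  \sum_(i < size [seq val y | y <- s]) f i * nth 0 [seq val y | y <- s] i
  = \sum_(i < size s) f i * (s`_i)%R.
Proof. by rewrite size_map; apply: eq_bigr => i _; rewrite (nth_map 0%R). Qed.

Section PrimeSquareModulus.

Variables (n p' i0 : nat) (s : seq 'Z_n) (F : nat -> nat -> nat).
Hypotheses (n_odd : odd n) (p'_prime : prime p') (logn_p' : logn p' n = 2).
Hypothesis logn_q : {in primes n, forall q, q != p' -> logn q n = 1}.

Let m := n %/ p' ^ 2.
Hypothesis unit_m_i0 : forall i, i < size s -> coprime (s`_i)%R m -> i = i0.

Hypothesis F_coprime : forall p i, p \in primes n -> coprime (F p i) p.
Hypothesis F_i0 : forall p, p \in primes n -> F p i0 = 1.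
Hypothesis F_sum :
  forall p, p \in primes n -> n`_p %| \sum_(i < size s) F p i * (s`_i)%R.

Let p'n : p' \in primes n. Proof. by rewrite -logn_gt0 logn_p'. Qed.

Let n_gt0 : 0 < n. Proof. by move: p'n; rewrite mem_primes => /and3P[]. Qed.

Let prime_of_primes p : p \in primes n -> prime p.
Proof. exact: allP (all_prime_primes n) p. Qed.

Let m_dvd_n : m %| n.
Proof. by rewrite dvdn_div // pfactor_dvdn // logn_p'. Qed.

Let p'Nm : ~~ (p' %| m).
Proof.
have p'2_dvd : p' ^ 2 %| n by rewrite pfactor_dvdn // logn_p'.
apply/negP=> /(dvdn_mul (dvdnn (p' ^ 2))); rewrite -expnSr mulnC divnK //.
by rewrite pfactor_dvdn // logn_p'.
Qed.

Let r i := pdiv (gcdn (s`_i)%R m).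

Let r_dvd_s i : r i %| (s`_i)%R.
Proof. exact: dvdn_trans (pdiv_dvd _) (dvdn_gcdl _ _). Qed.

Let r_neq_p' i : r i != p'.
Proof. by apply: contra p'Nm => /eqP <-; apply: dvdn_trans (pdiv_dvd _) (dvdn_gcdr _ _). Qed.

Let r_primes i : ~~ coprime (s`_i)%R m -> r i \in primes n.
Proof.
move=> nco; have m_gt0 : 0 < m by apply: dvdn_gt0 n_gt0 m_dvd_n.
have g_gt1 : 1 < gcdn (s`_i)%R m by rewrite ltn_neqAle eq_sym nco gcdn_gt0 m_gt0 orbT.
rewrite mem_primes pdiv_prime // n_gt0 /=.
by rewrite (dvdn_trans (pdiv_dvd _)) // (dvdn_trans (dvdn_gcdr _ _)).
Qed.

Let sgn i := (\prod_(p <- primes n | (p != p') && (p != r i)) legendre (F p i) p)%R.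

Let L p i := if p == r i then (if sgn i == 1%R then 1 else nonresidue p) else F p i.

Let L_coprime p i : p \in primes n -> coprime (L p i) p.
Proof.
move=> pn; rewrite /L; case: eqP => _; last exact: F_coprime.
case: eqP => _; first exact: coprime1n.
by apply: coprime_nonresidue; [apply: prime_of_primes | apply: primes_odd n_odd pn].
Qed.

Let L_sum p : p \in primes n -> n`_p %| \sum_(i < size s) L p i * (s`_i)%R.
Proof.
move=> pn; have [-> | pp'] := eqVneq p p'.
  rewrite (eq_bigr (fun i : 'I_(size s) => F p' i * (s`_i)%R)) ?F_sum // => i _.
  by rewrite /L eq_sym (negbTE (r_neq_p' i)).
have part_p : n`_p = p by rewrite p_part logn_q // expn1.
rewrite part_p /dvdn -modn_summ.
rewrite (eq_bigr (fun i : 'I_(size s) => F p i * (s`_i)%R %% p)) ?modn_summ.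
  by have := F_sum pn; rewrite part_p.
move=> i _; rewrite /L; case: eqP => // ->.
by rewrite !(eqP (dvdn_mull _ (r_dvd_s i))).
Qed.

Let sgn_sqr i : (sgn i ^+ 2 = 1)%R.
Proof.
rewrite -prodrXl big_seq_cond big1 // => p /andP[pn _].
by apply: legendre_sqr; rewrite -coprime_prime ?F_coprime ?prime_of_primes.
Qed.

Let L_jacobi i : i < size s ->
  (\prod_(p <- primes n) legendre (L p i) p ^+ logn p n = 1)%R.
Proof.
move=> lti; rewrite (@prod_expn_logn_square_part _ _ p') //; last first.
  by apply: legendre_sqr; rewrite -coprime_prime ?L_coprime.
have [ri_n | riNn] := boolP (r i \in primes n).
  rewrite -big_filter (bigD1_seq (r i)) ?filter_uniq ?primes_uniq ?mem_filter ?r_neq_p' //=.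
  rewrite big_filter_cond (eq_bigr (fun p => legendre (F p i) p)); last first.
    by move=> p /andP[_ pri]; rewrite /L (negbTE pri).
  by rewrite /L eqxx legendre_fix_sign ?prime_of_primes // (primes_odd n_odd).
have ii0 : i = i0 by apply: unit_m_i0 => //; apply: contraR riNn; apply: r_primes.
rewrite big_seq_cond big1 // => p /andP[pn _].
rewrite /L ifN; last by apply: contraNneq riNn => <-.
by rewrite ii0 F_i0 // legendre1 ?prime_gt1 ?prime_of_primes.
Qed.

Lemma prime_square_weighted_zero_sum : weighted_zero_sum (@inS n) s.
Proof.
apply: (@weighted_zero_sum_chinese _ _ L) => //.
apply: leq_trans (prime_gt1 p'_prime) (dvdn_leq n_gt0 _).
by move: p'n; rewrite mem_primes => /and3P[].
Qed.

End PrimeSquareModulus.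

Theorem lemma4p3 (n p' : nat) (s : seq 'Z_n) :
  odd n -> 0 < n ->
  prime p' -> logn p' n = 2 ->
  (forall q, prime q -> q %| n -> q != p' -> logn q n = 1) ->
  (forall p, prime p -> p %| n ->
     1 < count (fun x : 'Z_n => coprime (nat_of_ord x) p) s) ->
  count (fun x : 'Z_n => coprime ((nat_of_ord x) %% (n %/ p' ^ 2)) (n %/ p' ^ 2)) s
    <= 1 ->
  weighted_zero_sum (@inS n) s.
Proof.
move=> n_odd _ p'_prime logn_p' logn_q two_units one_unit_m.
set m := n %/ p' ^ 2 in one_unit_m.
set unit_m := (fun x : 'Z_n => _) in one_unit_m.
pose i0 := find unit_m s.
have unit_m_i0 i : i < size s -> coprime (s`_i)%R m -> i = i0.
  move=> lti co_i; apply: (@count_le1_find _ 0%R _ _ _ one_unit_m lti).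
  by rewrite /unit_m coprime_modl.
have local_weights : {in primes n, forall p, exists f : nat -> nat,
    [/\ forall i, coprime (f i) p, f i0 = 1
      & n`_p %| \sum_(i < size s) f i * (s`_i)%R]}.
  move=> p pn; move: (pn); rewrite mem_primes => /and3P[p_pr _ p_dvd].
  have two_units_p : 1 < count (coprime^~ p) [seq val y | y <- s].
    by rewrite count_map; apply: two_units.
  have [f []] :=
    prime_power_unit_weighted_sum (logn p n) i0 p_pr (primes_odd n_odd pn) two_units_p.
  by rewrite sum_map_val_nth -p_part; exists f.
have [F F_local] := all_exists_in id local_weights.
apply: (prime_square_weighted_zero_sum (F := F) n_odd p'_prime logn_p' _ unit_m_i0)
  => [q | p i /F_local[] | p /F_local[] | p /F_local[]] //.
by rewrite mem_primes => /and3P[q_pr _ q_dvd]; apply: logn_q.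
Qed.
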